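(* Let $\lambda=(\lambda_1,\ldots,\lambda_n)\in\mathbb{R}_{<0}^n$ have pairwise distinct entries. Then $\nu_{0,\lambda}(t)\le 1$ and $\dot\nu_{0,\lambda}(t)\le 0$ for all $t\ge 0$, and $\nu_{0,\lambda}(0)=1$.
   Context: $V_\lambda$ is the $n\times n$ Vandermonde matrix with $(i,j)$ entry $\lambda_j^{i-1}$, and $[\nu_{0,\lambda}(t),\ldots,\nu_{n-1,\lambda}(t)]=[e^{\lambda_1 t},\ldots,e^{\lambda_n t}]V_\lambda^{-1}$. *)

From HB Require Import structures.
From mathcomp Require Import all_boot all_order all_algebra.
From mathcomp Require Import all_classical all_reals all_analysis.
Set Implicit Arguments. Unset Strict Implicit. Unset Printing Implicit Defensive.
Import Order.TTheory GRing.Theory Num.Theory.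
Local Open Scope ring_scope.

(* V_lambda: (i,j) entry lambda_j^(i-1) (0-indexed: lam 0 j ^+ i) = mathcomp's Vandermonde. *)
Definition Vlam (R : realType) (n : nat) (lam : 'rV[R]_n) : 'M[R]_n :=
  Vandermonde n lam.

Definition nu_vec (R : realType) (n : nat) (lam : 'rV[R]_n) (t : R) : 'rV[R]_n :=
  (\row_j expR (lam 0 j * t)) *m invmx (Vlam lam).

(* nu_{0,lam}; n.+1 entries so that index 0 exists *)
Definition nu0 (R : realType) (n : nat) (lam : 'rV[R]_n.+1) (t : R) : R :=
  nu_vec lam t 0 0.

From HB Require Import structures.
From mathcomp Require Import all_boot all_order all_algebra.
From mathcomp Require Import all_classical all_reals all_analysis.
From mathcomp Require Import ring.
Set Implicit Arguments.
Unset Strict Implicit.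
Unset Printing Implicit Defensive.

Import Order.TTheory GRing.Theory Num.Theory.
Import numFieldNormedType.Exports.
Local Open Scope ring_scope.

(* nu_0(t) = sum_j L_j(0) e^(lam_j t), where L_j are the Lagrange basis polynomials
   of the nodes lam_j; hence nu_0(0) = sum_j L_j(0) = 1.  Since
   lam_j L_j(0) = -(prod_k (-lam_k)) w_j with w_j the barycentric weights,
   nu_0' = -(prod_k (-lam_k)) D, where D(t) = sum_j w_j e^(lam_j t) is the divided
   difference of x |-> e^(x t) on the nodes.  D >= 0 on t >= 0 by induction on the
   nodes: adding a node a, (e^(-a t) D_(a::s))' = e^(-a t) D_s, and e^(-a t) D_(a::s)
   is 0 at t = 0 because the weights of at least two nodes sum to 0. *)

Lemma big_codom (R : Type) (idx : R) (op : R -> R -> R) (I : Type) (J : finType)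
    (f : J -> I) (F : I -> R) :
  \big[op/idx]_(i <- codom f) F i = \big[op/idx]_j F (f j).
Proof. by rewrite codomE big_map enumT. Qed.

Section LagrangeInterpolation.
Variable F : fieldType.
Implicit Types (s : seq F) (x y : F) (p : {poly F}).

(* qpoly's [x.-lagrange] needs the nodes as an injective [x : nat -> F]; here they
   form a sequence, so that nodes can be added one at a time (bary_weight_cons). *)
Definition node_poly s x : {poly F} := \prod_(k <- s | k != x) ('X - k%:P).
Definition bary_weight s x : F := (node_poly s x).[x]^-1.
Definition lagrange_poly s x : {poly F} := bary_weight s x *: node_poly s x.

Lemma horner_node_poly s x y : (node_poly s x).[y] = \prod_(k <- s | k != x) (y - k).
Proof. by rewrite horner_prod; apply: eq_bigr => k _; rewrite hornerXsubC. Qed.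

Lemma bary_weightE s x : bary_weight s x = (\prod_(k <- s | k != x) (x - k))^-1.
Proof. by rewrite /bary_weight horner_node_poly. Qed.

Lemma bary_weight_cons a s x : x != a ->
  bary_weight (a :: s) x * (x - a) = bary_weight s x.
Proof.
move=> xa; rewrite !bary_weightE big_cons eq_sym xa invfM mulrAC mulVf ?mul1r //.
by rewrite subr_eq0.
Qed.

Section UniqNodes.
Variable s : seq F.
Hypothesis s_uniq : uniq s.

Lemma size_node_poly x : x \in s -> size (node_poly s x) = size s.
Proof.
move=> xs; rewrite /node_poly -big_filter size_prod_XsubC -rem_filter //.
by rewrite size_rem // prednK // lt0n size_eq0; apply: contraTneq xs => ->.
Qed.

Lemma lagrange_poly_sample x y : x \in s -> y \in s ->
  (lagrange_poly s x).[y] = (x == y)%:R.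
Proof.
move=> xs ys; rewrite hornerZ; have [<-|xy] := eqVneq x y.
  rewrite mulVf // horner_node_poly prodf_seq_neq0.
  by apply/allP => k _; apply/implyP; rewrite subr_eq0 eq_sym.
by rewrite horner_node_poly (big_rem y) //= eq_sym xy subrr mul0r mulr0.
Qed.

Lemma lagrange_interpolation p : (size p <= size s)%N ->
  \sum_(x <- s) p.[x] *: lagrange_poly s x = p.
Proof.
move=> sp; apply/eqP; rewrite -subr_eq0; apply/eqP/(roots_geq_poly_eq0 _ s_uniq).
  apply/allP => y ys; rewrite /root !hornerE horner_sum (bigD1_seq y) //=.
  rewrite hornerZ lagrange_poly_sample // eqxx mulr1 big1_seq ?addr0 ?subrr //.
  by move=> x /andP[xy xs]; rewrite hornerZ lagrange_poly_sample // (negbTE xy) mulr0.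
rewrite (leq_trans (size_polyD _ _)) // size_polyN geq_max sp andbT.
rewrite (leq_trans (size_sum _ _ _)) // big_seq; elim/big_ind: _ => //.
  by move=> m k; rewrite geq_max => ->.
move=> x xs; rewrite (leq_trans (size_scale_leq _ _)) // /lagrange_poly.
by rewrite (leq_trans (size_scale_leq _ _)) // size_node_poly.
Qed.

Lemma sum_lagrange_poly : s != [::] -> \sum_(x <- s) lagrange_poly s x = 1.
Proof.
move=> s_nil; rewrite -[RHS]lagrange_interpolation ?size_poly1 ?lt0n ?size_eq0 //.
by apply: eq_bigr => x _; rewrite hornerC scale1r.
Qed.

Lemma sum_bary_weight_eq0 : (1 < size s)%N -> \sum_(x <- s) bary_weight s x = 0.
Proof.
move=> s_gt1; have s_nil : s != [::] by rewrite -size_eq0 -lt0n ltnW.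
have top_coef1 x : x \in s -> (node_poly s x)`_(size s).-1 = 1.
  by move=> xs; rewrite -(size_node_poly xs); apply: lead_coef_prod_XsubC.
have := congr1 (coefp (size s).-1) (sum_lagrange_poly s_nil).
rewrite /= coef1 coef_sum -subn1 subn_eq0 leqNgt s_gt1 subn1 mulr0n.
move=> sum_top; rewrite -[RHS]sum_top; apply: eq_big_seq => x xs.
by rewrite coefZ top_coef1 ?mulr1.
Qed.

Lemma mul_lagrange_poly0 x : x \in s ->
  x * (lagrange_poly s x).[0] = - (\prod_(k <- s) - k) * bary_weight s x.
Proof.
move=> xs; rewrite hornerZ horner_node_poly (bigD1_seq x) //=.
under eq_bigr do rewrite sub0r.
ring.
Qed.

End UniqNodes.

Lemma invmx_Vandermonde n (a : 'rV[F]_n) : injective (a 0) ->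
  invmx (Vandermonde n a) = \matrix_(j, i) (lagrange_poly (codom (a 0)) (a 0 j))`_i.
Proof.
move=> a_inj; set s := codom (a 0); set C := \matrix_(j, i) _.
have s_uniq : uniq s by apply/injectiveP.
have VC : Vandermonde n a *m C = 1%:M.
  apply/matrixP => i k; rewrite !mxE.
  have := lagrange_interpolation s_uniq (p := 'X^i).
  rewrite size_polyXn size_codom card_ord => /(_ (ltn_ord i)) /(congr1 (coefp k)).
  rewrite /= coefXn coef_sum eq_sym big_codom => <-.
  by apply: eq_bigr => j _; rewrite !mxE hornerXn coefZ.
by rewrite -[C]mul1mx -(mulVmx (proj1 (mulmx1_unit VC))) -mulmxA VC mulmx1.
Qed.

End LagrangeInterpolation.

Section ExpSums.
Variable R : realType.
Implicit Types (s : seq R) (b t : R).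

Lemma is_derive_expRM b t : is_derive t 1 (fun u => expR (b * u)) (b * expR (b * t)).
Proof.
have lin : is_derive t 1 ( *%R b) b.
  by have := is_deriveZ b (is_derive_id t 1); rewrite scaler1.
have lin_d : derivable ( *%R b) t 1 by apply: ex_derive.
have exp_d : derivable expR (b * t) 1 by apply: derivable_expR.
apply: DeriveDef; first by apply/derivable1_diffP/differentiable_comp; apply/derivable1_diffP.
rewrite -derive1E (derive1_comp (f := *%R b) (g := expR)) //.
by rewrite !derive1E !derive_val mulrC.
Qed.

Lemma is_derive_sum_expRM s (c b : R -> R) t :
  is_derive t 1 (fun u => \sum_(x <- s) c x * expR (b x * u))
    (\sum_(x <- s) c x * b x * expR (b x * t)).
Proof.
elim: s => [|y s IH].
  under eq_fun do rewrite big_nil.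
  by rewrite big_nil; apply: is_derive_cst.
under eq_fun do rewrite big_cons.
rewrite big_cons -mulrA; apply: is_deriveD => //.
exact: is_deriveZ (is_derive_expRM (b y) t).
Qed.

Lemma is_derive_ge0_le (f df : R -> R) (a b : R) :
  (forall x : R, is_derive x 1 f (df x)) -> {in `[a, b], forall x, 0 <= df x} ->
  a <= b -> f a <= f b.
Proof.
move=> f_df df_ge0 ab; have f_der x : derivable f x 1 by case: (f_df x).
apply: (@ger0_derive1_le_cc _ f a b) => //.
- by move=> x x_in; rewrite derive1E derive_val df_ge0 // (subset_itv_oo_cc x_in).
- by apply: derivable_within_continuous => x _; apply: f_der.
- by rewrite in_itv /= lexx.
- by rewrite in_itv /= lexx ab.
Qed.

Definition expR_divdiff s t := \sum_(x <- s) bary_weight s x * expR (x * t).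

Lemma is_derive_expR_divdiff_cons a s t : a \notin s ->
  is_derive t 1 (fun u => expR (- a * u) * expR_divdiff (a :: s) u)
    (expR (- a * t) * expR_divdiff s t).
Proof.
move=> a_s.
have -> : (fun u => expR (- a * u) * expR_divdiff (a :: s) u) =
    (fun u => \sum_(x <- a :: s) bary_weight (a :: s) x * expR ((x - a) * u)).
  apply/funext => u; rewrite /expR_divdiff mulr_sumr; apply: eq_bigr => x _.
  by rewrite mulrBl expRD mulNr; ring.
apply: is_derive_eq (is_derive_sum_expRM _ _ (fun x => x - a) t) _.
rewrite big_cons subrr mulr0 mul0r add0r /expR_divdiff mulr_sumr.
apply: eq_big_seq => x xs; have xa : x != a by apply: contraNneq a_s => <-.
by rewrite -(bary_weight_cons s xa) mulrBl expRD mulNr; ring.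
Qed.

Lemma expR_divdiff_ge0 s t : uniq s -> 0 <= t -> 0 <= expR_divdiff s t.
Proof.
elim: s t => [|a s IH] t; first by rewrite /expR_divdiff big_nil.
move=> /= /andP[a_s s_uniq] t_ge0.
pose G u := expR (- a * u) * expR_divdiff (a :: s) u.
have G0_ge0 : 0 <= G 0.
  rewrite /G mulr0 expR0 mul1r /expR_divdiff.
  under eq_bigr do rewrite mulr0 expR0 mulr1.
  have [->|s_nil] := eqVneq s [::].
    by rewrite big_seq1 bary_weightE big_cons eqxx big_nil invr1.
  by rewrite sum_bary_weight_eq0 //= ?a_s // ltnS lt0n size_eq0.
have G_ge0 : 0 <= G t.
  apply: le_trans G0_ge0 _; apply: is_derive_ge0_le t_ge0.
  - by move=> x; apply: is_derive_expR_divdiff_cons.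
  - by move=> x; rewrite in_itv /= => /andP[x_ge0 _]; rewrite mulr_ge0 ?expR_ge0 ?IH.
have -> : expR_divdiff (a :: s) t = expR (a * t) * G t.
  by rewrite /G mulrA -expRD mulNr addrN expR0 mul1r.
by rewrite mulr_ge0 ?expR_ge0.
Qed.

End ExpSums.

Section NuZero.
Variables (R : realType) (n : nat) (lam : 'rV[R]_n.+1).
Hypothesis lam_inj : injective (lam 0).
Local Notation nodes := (codom (lam 0)).

Lemma uniq_nodes : uniq nodes.
Proof. by apply/injectiveP. Qed.

Lemma nu0E t : nu0 lam t = \sum_(x <- nodes) (lagrange_poly nodes x).[0] * expR (x * t).
Proof.
rewrite /nu0 /nu_vec /Vlam invmx_Vandermonde // !mxE big_codom.
by apply: eq_bigr => j _; rewrite !mxE horner_coef0 mulrC.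
Qed.

Lemma nu0_at0 : nu0 lam 0 = 1.
Proof.
rewrite nu0E; under eq_bigr do rewrite mulr0 expR0 mulr1.
by rewrite -horner_sum sum_lagrange_poly ?uniq_nodes ?hornerC // -size_eq0 size_codom card_ord.
Qed.

Lemma is_derive_nu0 (t : R) :
  is_derive t 1 (nu0 lam) (- (\prod_(x <- nodes) - x) * expR_divdiff nodes t).
Proof.
rewrite (funext nu0E); apply: is_derive_eq (is_derive_sum_expRM _ _ id t) _.
rewrite /expR_divdiff mulr_sumr; apply: eq_big_seq => x x_in /=.
by rewrite [_ * x]mulrC mul_lagrange_poly0 ?uniq_nodes // mulrA.
Qed.

End NuZero.

Theorem proposition9 (R : realType) (n : nat) (lam : 'rV[R]_n.+1)
  (hneg : forall j, lam 0 j < 0)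
  (hdist : injective (fun j => lam 0 j)) :
  (forall t : R, 0 <= t -> nu0 lam t <= 1 /\ derive1 (nu0 lam) t <= 0)
  /\ nu0 lam 0 = 1.
Proof.
set s := codom (lam 0).
have prod_gt0 : 0 < \prod_(x <- s) - x.
  by rewrite big_seq prodr_gt0 // => _ /codomP[j ->]; rewrite oppr_gt0.
have der_le0 t : 0 <= t -> - (\prod_(x <- s) - x) * expR_divdiff s t <= 0.
  move=> t_ge0; rewrite mulNr oppr_le0 mulr_ge0 ?(ltW prod_gt0) //.
  exact: expR_divdiff_ge0 (uniq_nodes hdist) t_ge0.
split; last exact: nu0_at0.
move=> t t_ge0; split; last first.
  by rewrite derive1E; case: (is_derive_nu0 hdist t) => _ ->; apply: der_le0.
rewrite -(nu0_at0 hdist) -lerN2.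
apply: is_derive_ge0_le (fun x => is_deriveN (is_derive_nu0 hdist x)) _ t_ge0.
by move=> x; rewrite in_itv /= oppr_ge0 => /andP[x_ge0 _]; apply: der_le0.
Qed.
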